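(* Let $p\ge2$ and $p'$ be coprime positive integers, let $T_m$ denote the $m$-th Chebyshev polynomial of the first kind ($T_m(\cosh\tau)=\cosh(m\tau)$), and let $G^{(2)}_{\mathrm{cl.}}(\zeta,Q)$ be the semiclassical spectral polynomial described below. Then, up to normalisation, $$G^{(2)}_{\mathrm{cl.}}(\zeta,Q)=\begin{cases}\displaystyle\prod_{a=1}^{(p-1)/2}\left(T_p\Big(\frac{Q}{2\cos(\pi p'a/p)}\Big)-T_{p'}\big((-1)^a\zeta\big)\right), & p\text{ odd},\\[2ex] \displaystyle Q^{p/2}\prod_{a=1}^{(p-2)/2}\left(T_p\Big(\frac{Q}{2\cos(\pi p'a/p)}\Big)-T_{p'}\big((-1)^a\zeta\big)\right), & p\text{ even}.\end{cases}$$
   Context: $G^{(2)}_{\mathrm{cl.}}(\zeta,Q)$ is the $g_s\to0$ limit, in the conformal background, of the characteristic polynomial $\det\big(Q\,\mathbb{I}-\mathcal{Q}^{(2)}(t;\zeta)\big)$ of the $\binom p2\times\binom p2$ Lax matrix governing $\partial_\zeta$ of the vector of degree-$2$ generalised Wronskians of solutions of the $(p,p')$ system $\zeta\psi=\mathbb{P}\psi$, $\partial_\zeta\psi=\mathbb{Q}\psi$. Concretely, in this limit it is the polynomial in $Q$ of degree $p(p-1)/2$ whose zeros, for $\zeta=\cosh(p\tau)$, are $Q^{(j_1)}(\tau)+Q^{(j_2)}(\tau)$ for $1\le j_1<j_2\le p$, where $Q^{(j)}(\tau)=\cosh\big[p'(\tau-2\pi\mathrm{i}(j-1)/p)\big]$.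 *)

From HB Require Import structures.
From mathcomp Require Import all_boot all_order all_algebra.
From mathcomp Require Import all_classical all_reals all_analysis.
From mathcomp Require Import complex.
Set Implicit Arguments. Unset Strict Implicit. Unset Printing Implicit Defensive.
Import Order.TTheory GRing.Theory Num.Theory.
Local Open Scope ring_scope.
Local Open Scope complex_scope.

Fixpoint chebT_pair (K : nzRingType) (n : nat) : {poly K} * {poly K} :=
  (* returns (T_n, T_{n+1}) *)
  match n with
  | 0 => (1, 'X)
  | m.+1 => let: (a, b) := chebT_pair K m in (b, 'X *+ 2 * b - a)
  end.
Definition chebT (K : nzRingType) (n : nat) : {poly K} := (chebT_pair K n).1.

Definition cexp (R : realType) (z : R[i]) : R[i] :=
  (expR (complex.Re z))%:C * (cos (complex.Im z) +i* sin (complex.Im z)).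

Definition ccosh (R : realType) (z : R[i]) : R[i] :=
  (cexp z + cexp (- z)) / 2%:R.

(* Q^{(j)}(tau) = cosh[p' (tau - 2 pi i (j-1)/p)],  j = 1..p;
   here indexed by k = j - 1 : 'I_p. *)
Definition Qj (R : realType) (p p' : nat) (k : nat) (tau : R[i]) : R[i] :=
  ccosh (p'%:R * (tau - (0 +i* (2 * pi * k%:R / p%:R)))).

(* Semiclassical spectral polynomial G^{(2)}_cl evaluated at Q, with
   zeta = cosh(p tau): product over 1 <= j1 < j2 <= p of
   (Q - Q^{(j1)}(tau) - Q^{(j2)}(tau)). *)
Definition G2cl (R : realType) (p p' : nat) (tau Q : R[i]) : R[i] :=
  \prod_(j1 < p) \prod_(j2 < p | (j1 < j2)%N)
     (Q - Qj p p' j1 tau - Qj p p' j2 tau).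

Definition Gfactor (R : realType) (p p' a : nat) (zeta Q : R[i]) : R[i] :=
  (chebT _ p).[Q / (2 * cos (pi * (p' * a)%:R / p%:R))%:C]
  - (chebT _ p').[(-1) ^+ a * zeta].

Definition G2rhs (R : realType) (p p' : nat) (zeta Q : R[i]) : R[i] :=
  if odd p then
    \prod_(1 <= a < (p - 1)./2 + 1) Gfactor p p' a zeta Q
  else
    Q ^+ (p./2) * \prod_(1 <= a < (p - 2)./2 + 1) Gfactor p p' a zeta Q.

From HB Require Import structures.
From mathcomp Require Import all_boot all_order all_algebra.
From mathcomp Require Import all_classical all_reals all_analysis.
From mathcomp Require Import complex.
From mathcomp Require Import ring lra zify.
Import Order.TTheory GRing.Theory Num.Theory.
Set Implicit Arguments. Unset Strict Implicit. Unset Printing Implicit Defensive.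
Local Open Scope ring_scope.
Local Open Scope complex_scope.

(* With J(x) = (x + 1/x)/2, w = e^(p' tau) and mu = e^(-i pi p'/p), the roots
   are Q^(j) = J(w nu^j) where nu = mu^2 is a primitive p-th root of unity
   (p and p' are coprime), and T_n(J x) = J(x^n).  Group the pairs j1 < j2 by
   their cyclic difference d = j2 - j1 mod p, so that d and p - d give the same
   p pairs {j, j + d}.  For 0 < 2d < p the identity
   J(a) + J(a mu^(2d)) = (mu^d + mu^-d) J(a mu^d) together with
   prod_j (X - J(y nu^j)) = 2^(1-p) (T_p(X) - J(y^p)) turns the product over
   this orbit into T_p(Q / 2cos(pi p' d/p)) - T_p'((-1)^d zeta), up to a nonzero
   constant.  For even p the orbit d = p/2 has only p/2 pairs, and
   nu^(p/2) = -1 gives Q^(j) + Q^(j + p/2) = 0, contributing Q^(p/2). *)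

Lemma chebT_pairE (K : nzRingType) n : chebT_pair K n = (chebT K n, chebT K n.+1).
Proof. by rewrite /chebT /=; case: chebT_pair. Qed.

Lemma chebTSS (K : nzRingType) n :
  chebT K n.+2 = 'X *+ 2 * chebT K n.+1 - chebT K n.
Proof. by rewrite {1}/chebT /= chebT_pairE. Qed.

Section Joukowski.
Variable K : numFieldType.

Definition joukowski (x : K) := (x + x^-1) / 2%:R.

Lemma joukowskiN (x : K) : joukowski (- x) = - joukowski x.
Proof. by rewrite /joukowski invrN -opprD mulNr. Qed.

Lemma joukowski_sign (x : K) d :
  joukowski ((-1) ^+ d * x) = (-1) ^+ d * joukowski x.
Proof. by rewrite -signr_odd; case: odd; rewrite ?mul1r // !mulN1r joukowskiN. Qed.

Lemma chebT_joukowski (x : K) n : x != 0 ->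
  (chebT K n).[joukowski x] = joukowski (x ^+ n).
Proof.
move=> x0.
suff [] : (chebT K n).[joukowski x] = joukowski (x ^+ n) /\
          (chebT K n.+1).[joukowski x] = joukowski (x ^+ n.+1) by [].
elim: n => [|n [IHn IHSn]].
  by rewrite /chebT /= hornerC hornerX /joukowski expr0 invr1 divff.
split=> //; rewrite chebTSS hornerD hornerN hornerM hornerMn hornerX IHn IHSn.
have y0 : x ^+ n != 0 by rewrite expf_neq0.
rewrite /joukowski !exprS; move: (x ^+ n) y0 => y y0; field.
by rewrite x0 y0.
Qed.
End Joukowski.

Section RootsOfUnity.
Variable K : fieldType.

Lemma prim_rootV (nu : K) p : p.-primitive_root nu -> p.-primitive_root nu^-1.
Proof.
move=> nu_prim; have p_gt0 := prim_order_gt0 nu_prim.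
have nu0 : nu != 0 by rewrite (prim_root_eq0 nu_prim) -lt0n.
have -> : nu^-1 = nu ^+ p.-1.
  by apply: (mulIf nu0); rewrite mulVf // -exprSr prednK // prim_expr_order.
by rewrite prim_root_exp_coprime // coprimePn.
Qed.

Lemma prod_subr_prim (nu u v : K) p : p.-primitive_root nu ->
  \prod_(0 <= j < p) (u - v * nu ^+ j) = u ^+ p - v ^+ p.
Proof.
move=> nu_prim; have p_gt0 := prim_order_gt0 nu_prim.
have [->|v0] := eqVneq v 0.
  under eq_bigr do rewrite mul0r subr0.
  by rewrite prodr_const_nat subn0 expr0n gtn_eqF // subr0.
have := congr1 (horner^~ (u / v)) (factor_Xn_sub_1 nu_prim).
rewrite horner_prod hornerD hornerN hornerXn hornerC => E.
transitivity (\prod_(0 <= j < p) (v * (u / v - nu ^+ j))).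
  by apply: eq_bigr => j _; rewrite mulrBr mulrCA divff ?mulr1.
under eq_bigr do rewrite -hornerXsubC.
by rewrite big_split /= prodr_const_nat subn0 E mulrBr -exprMn mulrCA divff // mulr1 mulr1.
Qed.
End RootsOfUnity.

Section JoukowskiProducts.
Variable K : numClosedFieldType.

Lemma joukowski_surj (X : K) : exists2 x, x != 0 & X = joukowski x.
Proof.
set s := sqrtC (X ^+ 2 - 1).
have s2 : s ^+ 2 = X ^+ 2 - 1 by rewrite sqrtCK.
have inv : (X + s) * (X - s) = 1 by rewrite mulrC -subr_sqr s2 opprB addrC subrK.
have x0 : X + s != 0 by apply: contra_eq_neq inv => ->; rewrite mul0r eq_sym oner_neq0.
exists (X + s) => //; rewrite /joukowski.
have -> : (X + s)^-1 = X - s by rewrite -[LHS]mulr1 -inv mulKf.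
by field.
Qed.

Lemma joukowskiB (x a : K) : x != 0 -> a != 0 ->
  joukowski x - joukowski a = (x - a) * (x - a^-1) / (2%:R * x).
Proof. by move=> x0 a0; rewrite /joukowski; field; rewrite x0. Qed.

Lemma prod_joukowski_prim (nu y X : K) p : p.-primitive_root nu -> y != 0 ->
  \prod_(0 <= j < p) (X - joukowski (y * nu ^+ j))
  = ((chebT K p).[X] - joukowski (y ^+ p)) * 2%:R / 2%:R ^+ p.
Proof.
move=> nu_prim y0.
have nu0 : nu != 0 by rewrite (prim_root_eq0 nu_prim) -lt0n (prim_order_gt0 nu_prim).
have [x x0 ->] := joukowski_surj X.
rewrite chebT_joukowski // joukowskiB ?expf_neq0 //.
under eq_bigr do rewrite joukowskiB ?mulf_neq0 ?expf_neq0 // invfM -exprVn.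
rewrite !big_split /= prod_subr_prim // prod_subr_prim ?prim_rootV //.
rewrite prodr_const_nat subn0 !exprVn exprMn.
have xp0 : x ^+ p != 0 by rewrite expf_neq0.
move: (x ^+ p) xp0 => xp xp0; field.
by rewrite xp0 !expf_neq0 // pnatr_eq0.
Qed.

Lemma joukowskiD_sqr (a m : K) : a != 0 -> m != 0 ->
  joukowski a + joukowski (a * m ^+ 2) = (m + m^-1) * joukowski (a * m).
Proof. by move=> a0 m0; rewrite /joukowski; field; rewrite a0 m0. Qed.

Lemma prod_joukowski_pairs (mu w Q : K) p d : p.-primitive_root (mu ^+ 2) ->
  w != 0 -> mu ^+ d + mu ^- d != 0 ->
  \prod_(0 <= j < p)
     (Q - joukowski (w * (mu ^+ 2) ^+ j) - joukowski (w * (mu ^+ 2) ^+ (j + d)))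
  = (mu ^+ d + mu ^- d) ^+ p *
    (((chebT K p).[Q / (mu ^+ d + mu ^- d)] - joukowski ((w * mu ^+ d) ^+ p))
     * 2%:R / 2%:R ^+ p).
Proof.
move=> nu_prim w0 c0.
have nu0 : mu ^+ 2 != 0 by rewrite (prim_root_eq0 nu_prim) -lt0n (prim_order_gt0 nu_prim).
have mu0 : mu != 0 by apply: contraNneq nu0 => ->; rewrite expr0n.
rewrite -(prod_joukowski_prim _ nu_prim) ?mulf_neq0 ?expf_neq0 //.
rewrite -[in (_ + _) ^+ p](subn0 p) -prodr_const_nat -big_split /=.
apply: eq_bigr => j _.
have -> : (mu ^+ 2) ^+ (j + d) = (mu ^+ 2) ^+ j * (mu ^+ d) ^+ 2.
  by rewrite exprD -!exprM (mulnC d).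
rewrite -addrA -opprD mulrA joukowskiD_sqr ?mulf_neq0 ?expf_neq0 //.
by rewrite mulrBr [_ * (Q / _)]mulrC divfK // mulrAC.
Qed.
End JoukowskiProducts.

Section ProductReindexing.
Variable K : comPzSemiRingType.

Lemma prod_triangle_diag (f : nat -> nat -> K) n :
  \prod_(i < n) \prod_(j < n | (i < j)%N) f i j =
  \prod_(1 <= d < n) \prod_(0 <= i < n - d) f i (i + d)%N.
Proof.
rewrite -(big_mkord xpredT (fun i => \prod_(j < n | (i < j)%N) f i j)).
transitivity (\prod_(0 <= i < n) \prod_(1 <= d < n | (i + d < n)%N) f i (i + d)%N).
  apply: eq_bigr => i _.
  rewrite -(big_mkord (fun j => (i < j)%N) (f i)).
  rewrite (eq_bigl (fun j => true && (i.+1 <= j))%N) // -big_nat_widenl //.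
  rewrite -[i.+1]add1n big_addn (big_nat_widen _ _ n) ?leq_subr //.
  by apply: eq_big => [d|d _]; rewrite ?ltn_subRL addnC.
rewrite (exchange_big_dep_nat xpredT) //=.
apply: eq_bigr => d _.
rewrite [RHS](big_nat_widen _ _ n) ?leq_subr //.
by apply: eq_bigl => i; rewrite ltn_subRL addnC.
Qed.

Lemma prod_fold_nat (h : nat -> K) p m : (m + m < p)%N ->
  \prod_(1 <= d < p) h d =
  \prod_(1 <= d < m.+1) (h d * h (p - d)%N) * \prod_(m.+1 <= d < p - m) h d.
Proof.
move=> ltmp.
have tail : \prod_(p - m <= d < p) h d = \prod_(1 <= d < m.+1) h (p - d)%N.
  rewrite [RHS]big_nat_rev (_ : p - m = 1 + (p - m.+1))%N; last lia.
  rewrite big_addn (_ : p - (p - m.+1) = m.+1)%N; last lia.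
  by apply: eq_big_nat => d /andP[d_gt0 ltdm]; congr h; lia.
rewrite big_split /= -mulrA -tail [X in _ * X]mulrC mulrA -!big_cat_nat //; lia.
Qed.

Lemma prod_diag_cyclic (f : nat -> nat -> K) p d :
  (forall i j, f i j = f j i) -> (forall i j, f i (j + p)%N = f i j) -> (d <= p)%N ->
  \prod_(0 <= i < p - d) f i (i + d)%N * \prod_(0 <= i < p - (p - d)) f i (i + (p - d))%N
  = \prod_(0 <= j < p) f j (j + d)%N.
Proof.
move=> f_sym f_per le_dp.
rewrite subKn // [RHS](@big_cat_nat _ _ _ (p - d)%N) ?leq_subr //=; congr (_ * _).
rewrite -[in RHS](add0n (p - d)%N) big_addn subKn //.
by apply: eq_big_nat => i _; rewrite -addnA subnK // f_per f_sym.
Qed.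
End ProductReindexing.

Section ComplexExponential.
Variable R : realType.
Notation C := R[i].

Lemma cexp0 : cexp (0 : C) = 1.
Proof. by rewrite /cexp /= expR0 cos0 sin0; apply/eqP; rewrite eq_complex /=; simpc. Qed.

Lemma cexpD (z w : C) : cexp (z + w) = cexp z * cexp w.
Proof.
case: z => a b; case: w => c d; rewrite /cexp; simpc.
rewrite /= expRD sinD cosD; simpc.
by apply/eqP; rewrite eq_complex /=; apply/andP; split; apply/eqP; ring.
Qed.

Lemma cexp_mulN (z : C) : cexp z * cexp (- z) = 1.
Proof. by rewrite -cexpD subrr cexp0. Qed.

Lemma cexp_neq0 (z : C) : cexp z != 0.
Proof.
by apply/eqP => z0; have /eqP := cexp_mulN z; rewrite z0 mul0r eq_sym oner_eq0.
Qed.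

Lemma cexpN (z : C) : cexp (- z) = (cexp z)^-1.
Proof. by rewrite -[LHS](mulKf (cexp_neq0 z)) cexp_mulN mulr1. Qed.

Lemma cexpMn (z : C) n : cexp (n%:R * z) = cexp z ^+ n.
Proof.
elim: n => [|n IH]; first by rewrite mul0r cexp0.
by rewrite -addn1 natrD mulrDl mul1r cexpD IH exprD.
Qed.

Lemma ccosh_joukowski (z : C) : ccosh z = joukowski (cexp z).
Proof. by rewrite /ccosh cexpN. Qed.

Definition expi (t : R) : C := cexp (0 +i* t).

Lemma expiN t : expi (- t) = (expi t)^-1.
Proof. by rewrite /expi -cexpN; congr cexp; simpc. Qed.

Lemma expiMn t n : expi (n%:R * t) = expi t ^+ n.
Proof.
rewrite /expi -cexpMn; congr cexp.
have -> : (n%:R : C) = (n%:R : R) +i* 0 by rewrite complexr0 rmorph_nat.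
by simpc.
Qed.

Lemma expi_cos t : expi t + expi (- t) = (2 * cos t)%:C.
Proof.
rewrite /expi /cexp /= expR0 cosN sinN; apply/eqP; rewrite eq_complex /=; simpc.
by rewrite /= andbT; apply/eqP; ring.
Qed.

Lemma expi_pi : expi pi = -1.
Proof. by rewrite /expi /cexp /= expR0 cospi sinpi; apply/eqP; rewrite eq_complex /=; simpc. Qed.

Lemma expi_neq1 t : 0 < t < 2 * pi -> expi t != 1.
Proof.
move=> /andP[t_gt0 t_lt2pi]; rewrite /expi /cexp /= expR0 mul1r.
rewrite eq_complex /= negb_and; apply/orP.
have [t_ltpi|t_gtpi|->] := ltgtP t pi; last by left; rewrite cospi; lra.
- right; apply/eqP => sin0.
  by have := @sin_gt0_pi _ t; rewrite t_gt0 t_ltpi sin0 ltxx => /(_ isT).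
- right; apply/eqP => sin0.
  have : 0 < sin (t - pi) by apply: sin_gt0_pi; rewrite subr_gt0 t_gtpi /=; lra.
  by rewrite -(opprK (sin (t - pi))) -sinDpi subrK sin0 oppr0 ltxx.
Qed.

Lemma prim_root_expi p : (0 < p)%N -> p.-primitive_root (expi (2 * pi / p%:R)).
Proof.
move=> p_gt0; apply/andP; split=> //; apply/forallP => i; rewrite unity_rootE -expiMn.
have p0 : (p%:R : R) != 0 by rewrite pnatr_eq0 -lt0n.
have [ip|ne] := eqVneq i.+1 p.
  by rewrite ip mulrC divfK // -[2]/(2%:R) expiMn expi_pi sqrrN expr1n eqxx.
rewrite eqbF_neg expi_neq1 //.
have lt_ip : (i.+1 < p)%N by rewrite ltn_neqAle ne ltn_ord.
have -> : i.+1%:R * (2 * pi / p%:R) = 2 * pi * (i.+1%:R / p%:R) :> R by ring.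
have x_gt0 : (0 : R) < i.+1%:R / p%:R by rewrite divr_gt0 ?ltr0n.
have x_lt1 : (i.+1%:R / p%:R : R) < 1 by rewrite ltr_pdivrMr ?ltr0n // mul1r ltr_nat.
have := pi_gt0 R; nra.
Qed.
End ComplexExponential.

Section SpectralCurve.
Variables (R : realType) (p p' : nat).
Hypotheses (p_gt0 : (0 < p)%N) (coprime_pp' : coprime p p').
Notation C := R[i].

Definition mu : C := (expi (pi / p%:R))^-1 ^+ p'.

Lemma Qj_joukowski k (tau : C) :
  Qj p p' k tau = joukowski (cexp tau ^+ p' * (mu ^+ 2) ^+ k).
Proof.
rewrite /Qj ccosh_joukowski cexpMn cexpD cexpN exprMn.
have -> : cexp (0 +i* (2 * pi * k%:R / p%:R)) = expi (pi / p%:R) ^+ (2 * k) :> C.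
  by rewrite -expiMn /expi natrM; congr (cexp (0 +i* _)); ring.
by rewrite /mu -exprVn -!exprM mulnC mulnA.
Qed.

Lemma prim_root_mu2 : p.-primitive_root (mu ^+ 2).
Proof.
rewrite /mu -exprM mulnC exprM exprVn -expiMn mulrA.
by rewrite prim_root_exp_coprime ?prim_rootV ?prim_root_expi // coprime_sym.
Qed.

Lemma mu_neq0 : mu != 0.
Proof. by rewrite expf_neq0 // invr_eq0 cexp_neq0. Qed.

Lemma mu_pow_p : mu ^+ p = (-1) ^+ p'.
Proof.
rewrite /mu exprAC exprVn -expiMn mulrC divfK ?pnatr_eq0 -?lt0n //.
by rewrite expi_pi invrN1.
Qed.

Lemma mu_cos d : mu ^+ d + mu ^- d = (2 * cos (pi * (p' * d)%:R / p%:R))%:C.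
Proof.
rewrite /mu -exprM exprVn invrK -expiMn -expi_cos addrC -expiN.
by congr (expi _ + expi _); rewrite mulrCA mulrA.
Qed.

Lemma mu_cos_neq0 d : (0 < d)%N -> (d + d < p)%N -> mu ^+ d + mu ^- d != 0.
Proof.
move=> d_gt0 lt_ddp; apply/eqP => sum0.
have M0 : mu ^+ d != 0 by rewrite expf_neq0 // mu_neq0.
have M2 : (mu ^+ d) ^+ 2 = -1.
  have : mu ^+ d * (mu ^+ d + mu ^- d) = 0 by rewrite sum0 mulr0.
  by rewrite mulrDr mulfV // expr2 => /eqP; rewrite addr_eq0 => /eqP.
have : (mu ^+ 2) ^+ (d + d) == 1.
  have -> : (mu ^+ 2) ^+ (d + d) = ((mu ^+ d) ^+ 2) ^+ 2.
    by rewrite -!exprM; congr (_ ^+ _); lia.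
  by rewrite M2 sqrrN expr1n.
rewrite -(prim_order_dvd prim_root_mu2) => /dvdn_leq; lia.
Qed.

Lemma mu2_half m : p = (m.+1 + m.+1)%N -> (mu ^+ 2) ^+ m.+1 = -1.
Proof.
move=> p_eq; have : ((mu ^+ 2) ^+ m.+1) ^+ 2 == 1.
  by rewrite -exprM muln2 -addnn -p_eq (prim_expr_order prim_root_mu2).
rewrite sqrf_eq1 => /orP[|/eqP //].
rewrite -(prim_order_dvd prim_root_mu2) => /dvdn_leq; lia.
Qed.

Lemma Qj_periodic k (tau : C) : Qj p p' (k + p) tau = Qj p p' k tau.
Proof. by rewrite !Qj_joukowski exprD (prim_expr_order prim_root_mu2) mulr1. Qed.

Lemma joukowski_mu_pow d (tau : C) :
  joukowski ((cexp tau ^+ p' * mu ^+ d) ^+ p)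
  = (chebT C p').[(-1) ^+ d * ccosh (p%:R * tau)].
Proof.
rewrite ccosh_joukowski cexpMn -joukowski_sign chebT_joukowski; last first.
  by rewrite mulf_neq0 ?signr_eq0 ?expf_neq0 ?cexp_neq0.
congr joukowski; move: (cexp tau) => z.
have -> : (z ^+ p' * mu ^+ d) ^+ p = (z ^+ p) ^+ p' * ((-1) ^+ p') ^+ d.
  by rewrite exprMn -mu_pow_p -!exprM (mulnC p') (mulnC d).
by rewrite [RHS]exprMn -!exprM mulrC mulnC.
Qed.

Definition pair_const d : C := (mu ^+ d + mu ^- d) ^+ p * 2%:R / 2%:R ^+ p.

Lemma pair_const_neq0 d : (0 < d)%N -> (d + d < p)%N -> pair_const d != 0.
Proof.
move=> d_gt0 lt_ddp.
by rewrite /pair_const !mulf_neq0 ?invr_eq0 ?expf_neq0 ?pnatr_eq0 ?mu_cos_neq0.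
Qed.

Lemma prod_Qj_orbit d (tau Q : C) : (0 < d)%N -> (d + d < p)%N ->
  \prod_(0 <= j < p) (Q - Qj p p' j tau - Qj p p' (j + d) tau)
  = pair_const d * Gfactor p p' d (ccosh (p%:R * tau)) Q.
Proof.
move=> d_gt0 lt_ddp; under eq_bigr do rewrite !Qj_joukowski.
rewrite prod_joukowski_pairs ?prim_root_mu2 ?expf_neq0 ?cexp_neq0 ?mu_cos_neq0 //.
by rewrite joukowski_mu_pow /Gfactor -mu_cos /pair_const; ring.
Qed.

Lemma prod_Qj_diagonals d (tau Q : C) : (0 < d)%N -> (d + d < p)%N ->
  \prod_(0 <= i < p - d) (Q - Qj p p' i tau - Qj p p' (i + d) tau)
  * \prod_(0 <= i < p - (p - d)) (Q - Qj p p' i tau - Qj p p' (i + (p - d)) tau)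
  = pair_const d * Gfactor p p' d (ccosh (p%:R * tau)) Q.
Proof.
move=> d_gt0 lt_ddp.
rewrite (@prod_diag_cyclic _ (fun i j => Q - Qj p p' i tau - Qj p p' j tau)).
- exact: prod_Qj_orbit.
- by move=> i j; rewrite addrAC.
- by move=> i j; rewrite Qj_periodic.
- lia.
Qed.

Lemma prod_Qj_antipodal m (tau Q : C) : p = (m.+1 + m.+1)%N ->
  \prod_(0 <= i < p - m.+1) (Q - Qj p p' i tau - Qj p p' (i + m.+1) tau) = Q ^+ m.+1.
Proof.
move=> p_eq; rewrite (_ : p - m.+1 = m.+1)%N; last lia.
rewrite -[in RHS](subn0 m.+1) -prodr_const_nat; apply: eq_bigr => i _.
by rewrite !Qj_joukowski exprD mu2_half // mulrN1 mulrN joukowskiN opprK subrK.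
Qed.

End SpectralCurve.

Theorem proposition5p3p1 (R : realType) (p p' : nat) :
  (2 <= p)%N -> (0 < p')%N -> coprime p p' ->
  exists c : R[i], c != 0 /\
    forall tau Q : R[i],
      G2cl p p' tau Q = c * G2rhs p p' (ccosh (p%:R * tau)) Q.
Proof.
move=> p_ge2 _ cop; have p_gt0 : (0 < p)%N by lia.
set m := (p - 1)./2; have lt_mmp : (m + m < p)%N by lia.
exists (\prod_(1 <= d < m.+1) pair_const R p p' d); split.
  rewrite prodf_seq_neq0; apply/allP => d; rewrite mem_index_iota => /andP[d_gt0 lt_dm].
  by apply/implyP => _; apply: pair_const_neq0; lia.
move=> tau Q; set zeta := ccosh (p%:R * tau).
rewrite /G2cl (prod_triangle_diag (fun i j => Q - Qj p p' i tau - Qj p p' j tau)).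
rewrite (prod_fold_nat _ lt_mmp) [X in X * _ = _](eq_big_nat _ _
  (F2 := fun d => pair_const R p p' d * Gfactor p p' d zeta Q)); last first.
  by move=> d /andP[d_gt0 lt_dm]; apply: prod_Qj_diagonals; lia.
rewrite big_split /= /G2rhs; case: ifP => odd_p.
  by rewrite [X in _ * X = _]big_geq ?mulr1 ?addn1; last lia.
rewrite (_ : (p - 2)./2 = m)%N; last lia.
rewrite (_ : p - m = m.+2)%N; last lia.
rewrite big_nat1 prod_Qj_antipodal //; last lia.
rewrite (_ : p./2 = m.+1)%N; last lia.
by rewrite addn1 -mulrA [_ * Q ^+ _]mulrC.
Qed.
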